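(* For every set $P$ of $n$ points in the plane, the unit disk graph $\mathrm{UDG}(P)$ has a spanning subgraph $H$ with at most $9n$ edges such that for every edge $(p,q)$ of $\mathrm{UDG}(P)$, the hop distance between $p$ and $q$ in $H$ is at most $5$.
   Context: For a finite point set $P$ in the plane, the unit disk graph $\mathrm{UDG}(P)$ is the graph with vertex set $P$ having an edge between $p,q\in P$ if and only if the Euclidean distance $|pq|\le 1$. The hop distance between two vertices of a graph $H$ is the minimum number of edges on a path between them in $H$. *)

From HB Require Import structures.
From mathcomp Require Import all_boot all_order all_algebra.
Set Implicit Arguments. Unset Strict Implicit. Unset Printing Implicit Defensive.
Import Order.TTheory GRing.Theory Num.Theory.
Local Open Scope ring_scope.

Definition edist (R : rcfType) (a b : R * R) : R :=
  Num.sqrt ((a.1 - b.1) ^+ 2 + (a.2 - b.2) ^+ 2).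

(* Edge of UDG(P), where the point set P is given as an injective
   labelling p : T -> R*R of a finite type T. *)
Definition udg_edge (R : rcfType) (T : finType) (p : T -> R * R) (x y : T) : bool :=
  (x != y) && (edist (p x) (p y) <= 1).

(* A graph H on vertex set T given by its set of (unordered) edges,
   each edge being a 2-element subset of T. *)
Definition adjH (T : finType) (H : {set {set T}}) : rel T :=
  fun x y => (x != y) && ([set x; y] \in H).

Definition hop_le (T : finType) (H : {set {set T}}) (k : nat) (x y : T) : Prop :=
  exists s : seq T, [/\ (size s <= k)%N, path (adjH H) x s & last x s = y].

Definition spanning_subgraph_udg (R : rcfType) (T : finType) (p : T -> R * R)
  (H : {set {set T}}) : Prop :=
  forall e, e \in H -> exists x y, e = [set x; y] /\ udg_edge p x y.

From mathcomp Require Import all_boot all_order all_algebra.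
From mathcomp Require Import zify lra.
Set Implicit Arguments. Unset Strict Implicit. Unset Printing Implicit Defensive.
Import Order.TTheory GRing.Theory Num.Theory.
Local Open Scope ring_scope.

(* Cut the plane into square cells of side s = 1/sqrt 2: two points of one cell
   are adjacent, and the cells of the ends of a unit edge differ by at most 2 in
   each index, and not by 2 in both.  An ordered field need not be archimedean,
   so instead of taking floors each axis is cut into strips adapted to the
   finite point set.  Every cell picks a representative joined to all other
   points of the cell, and for each of 10 fixed offsets d (one from each pair
   +-d of possible offsets) the representative keeps one unit edge from its cell
   to the cell shifted by d, if there is any.  A unit edge x y is then covered
   by the route x, rep x, a, b, rep y, y.  A cell with k >= 2 points pays
   k - 1 + 10 <= 9 k edges; a cell with a single point cannot reach both offsets
   (1,-2) and (0,2), whose cells are more than 2 apart vertically, so it pays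
   at most 9. *)

Section Strips.
Variables (R : realFieldType) (s : R).
Hypothesis s_gt0 : 0 < s.

Definition strip_steps (st : int -> R) := forall k, st k + s <= st (k + 1).

Definition in_strip (f : R -> int) (st : int -> R) (w : R) :=
  st (f w) <= w < st (f w) + s.

Section StripIndex.
Variables (f : R -> int) (st : int -> R).
Hypothesis stP : strip_steps st.

Lemma strip_stepsD k (d : nat) : st k + d%:R * s <= st (k + d%:Z).
Proof.
elim: d => [|d IH]; first by rewrite mul0r !addr0.
have := stP (k + d%:Z); have -> : k + d%:Z + 1 = k + d.+1%:Z by lia.
rewrite -natr1; lra.
Qed.

Lemma strip_steps_le k l (d : nat) : k + d%:Z <= l -> st k + d%:R * s <= st l.
Proof.
move=> kdl; have -> : l = k + (`|l - k|%N)%:Z by lia.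
have : d%:R * s <= (`|l - k|%N)%:R * s by rewrite ler_pM2r // ler_nat; lia.
have := strip_stepsD k `|l - k|%N; lra.
Qed.

Lemma in_strip_index v w (d : nat) : in_strip f st v -> in_strip f st w ->
  w - v <= d%:R * s -> f w - f v <= d%:Z.
Proof.
move=> /andP[_ lt_v] /andP[ge_w _] le_wv; rewrite leNgt; apply/negP => far.
have := @strip_steps_le (f v) (f w) d.+1 ltac:(lia); rewrite -natr1; lra.
Qed.

Lemma in_strip_index_norm v w (d : nat) : in_strip f st v -> in_strip f st w ->
  `|w - v| <= d%:R * s -> `|f w - f v| <= d%:Z.
Proof.
move=> hv hw; rewrite ler_norml => /andP[le_vw le_wv].
have := in_strip_index hv hw le_wv; have := @in_strip_index w v d hw hv ltac:(lra).
rewrite ler_norml; lia.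
Qed.

Lemma in_strip_same v w : in_strip f st v -> in_strip f st w -> f v = f w -> v - w < s.
Proof.
by rewrite /in_strip => /andP[_ lt_v] /andP[ge_w _] same; rewrite same in lt_v; lra.
Qed.

End StripIndex.

Lemma strip_steps_extend st m v : strip_steps st -> st m + s <= v ->
  strip_steps (fun k => if k <= m then st k else v + (k - (m + 1))%:~R * s).
Proof.
move=> stP le_v k; case: (lerP k m) => km; case: (lerP (k + 1) m) => k1m.
- exact: stP.
- have -> : k = m by lia.
  by rewrite subrr mul0r addr0.
- lia.
- have -> : k + 1 - (m + 1) = k - (m + 1) + 1 by lia.
  by rewrite [in X in _ <= X]intrD mulrDl mul1r addrA.
Qed.

Lemma strips_of_sorted (b : R) (Y : seq R) : sorted >=%R Y -> all (>= b) Y ->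
  exists f st m, [/\ strip_steps st, {in Y, forall w, in_strip f st w},
                     {in Y, forall w, f w <= m} & st m <= head b Y].
Proof.
elim: Y => [|v Y IH] /=.
  exists (fun _ => 0), (fun k => b + k%:~R * s), 0; split => //=.
  - by move=> k; rewrite intrD mulrDl mul1r addrA.
  - by rewrite mulr0z mul0r addr0.
move=> sorted_vY /andP[b_v bY].
have [f [st [m [stP fP fm st_m]]]] := IH (path_sorted sorted_vY) bY.
have head_v : head b Y <= v by case: Y sorted_vY {IH fP fm st_m bY} => //= w Y /andP[].
case: (ltrP v (st m + s)) => v_m.
  exists (fun w => if w == v then m else f w), st, m; split => // [w|w|].
  - rewrite inE /in_strip /=; case: eqP => [-> _|_ /= /fP //].
    by rewrite v_m andbT; lra.
  - by rewrite inE /=; case: eqP => [_ _|_ /= /fm].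
  - lra.
exists (fun w => if w == v then m + 1 else f w),
  (fun k => if k <= m then st k else v + (k - (m + 1))%:~R * s), (m + 1).
have m1 : (m + 1 <= m) = false by lia.
split => [||w|] /=.
- exact: strip_steps_extend.
- move=> w; rewrite inE /in_strip /=; case: eqP => [-> _|_ /= wY].
    by rewrite m1 subrr mul0r addr0 lexx ltrDl.
  by rewrite (fm w wY); apply: fP.
- by rewrite inE /=; case: eqP => [_ _|_ /= /fm]; lia.
- by rewrite m1 subrr mul0r addr0.
Qed.

Lemma strips_exist (X : seq R) :
  exists f st, strip_steps st /\ {in X, forall w, in_strip f st w}.
Proof.
have [b bX] : exists b, all (>= b) X.
  elim: X => [|x X [b bX]]; first by exists 0.
  exists (Num.min x b); rewrite /= ge_min lexx /=.
  by apply: sub_all bX => w; apply: le_trans; rewrite ge_min lexx orbT.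
have ge_total : total (>=%R : rel R) by move=> x y; exact: le_total.
have := strips_of_sorted (b := b) (sort_sorted ge_total X).
rewrite all_sort => /(_ bX) [f [st [_ [stP fP _ _]]]].
by exists f, st; split => // w; rewrite -(mem_sort >=%R); apply: fP.
Qed.

End Strips.

Section UnitDiskGraph.
Variables (R : rcfType) (T : finType) (p : T -> R * R).

Lemma edist_le1 (a b : R * R) :
  (edist a b <= 1) = ((a.1 - b.1) ^+ 2 + (a.2 - b.2) ^+ 2 <= 1).
Proof. by rewrite /edist -{1}sqrtr1 ler_sqrt // ler01. Qed.

Lemma udg_edge_sym x y : udg_edge p x y = udg_edge p y x.
Proof.
by rewrite /udg_edge eq_sym !edist_le1 -[_ ^+ 2]sqrrN -[X in _ + X]sqrrN !opprB.
Qed.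

Lemma udg_edge_sqr x y : udg_edge p x y ->
  ((p y).1 - (p x).1) ^+ 2 + ((p y).2 - (p x).2) ^+ 2 <= 1.
Proof. by rewrite udg_edge_sym => /andP[_]; rewrite edist_le1. Qed.

End UnitDiskGraph.

Section Hops.
Variables (T : finType) (H : {set {set T}}).

Lemma hop_le_refl k x : hop_le H k x x.
Proof. by exists [::]. Qed.

Lemma hop_le_edge x y : [set x; y] \in H -> hop_le H 1 x y.
Proof.
case: (eqVneq x y) => [-> _|neq_xy xyH]; first exact: hop_le_refl.
by exists [:: y]; rewrite /= /adjH neq_xy xyH.
Qed.

Lemma hop_le_cat k l x y z : hop_le H k x y -> hop_le H l y z -> hop_le H (k + l) x z.
Proof.
move=> [s1 [size1 path1 last1]] [s2 [size2 path2 last2]]; exists (s1 ++ s2); split.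
- by rewrite size_cat leq_add.
- by rewrite cat_path path1 last1 path2.
- by rewrite last_cat last1.
Qed.

Lemma hop_le_sym k x y : hop_le H k x y -> hop_le H k y x.
Proof.
move=> [s [size_s path_s <-]]; elim: s x k size_s path_s => [|z s IH] x k /=.
  by move=> _ _; apply: hop_le_refl.
case: k => // k size_s /andP[xz path_s].
rewrite -addn1; apply: hop_le_cat (IH _ _ size_s path_s) (hop_le_edge _).
by move: xz => /andP[_]; rewrite setUC.
Qed.

End Hops.

Section Representatives.
Variables (T : finType) (K : eqType) (key : T -> K).

Definition rep t := odflt t [pick u | key u == key t].

Lemma rep_key t : key (rep t) = key t.
Proof. by rewrite /rep; case: pickP => [u /eqP //|/(_ t)]; rewrite eqxx. Qed.

Lemma rep_eq t u : key t = key u -> rep t = rep u.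
Proof. by move=> e; rewrite /rep e; case: pickP => // /(_ u); rewrite eqxx. Qed.

Lemma rep_id t : rep (rep t) = rep t.
Proof. exact: rep_eq (rep_key t). Qed.

Definition reps := [set t | rep t == t].

Definition crowded := [set rep t | t in ~: reps].

Lemma uncrowded_class r t : r \in reps -> r \notin crowded -> key t = key r -> t = r.
Proof.
rewrite inE => /eqP rr r_uncrowded /rep_eq; rewrite rr => rt.
apply/eqP; apply: contraNT r_uncrowded => neq_tr.
by apply/imsetP; exists t; rewrite ?inE rt // eq_sym.
Qed.

End Representatives.

Definition dirs : seq (int * int) :=
  [:: (0, 1); (0, 2); (1, -2); (1, -1); (1, 0); (1, 1); (1, 2); (2, -1); (2, 0); (2, 1)].

Definition near (d : int * int) :=
  [&& d != (0, 0), `|d.1| <= 2, `|d.2| <= 2 & (`|d.1| < 2) || (`|d.2| < 2)].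

Lemma near_dirs d : near d -> (d \in dirs) || ((- d.1, - d.2) \in dirs).
Proof.
case: d => a b; rewrite /near /= => /and4P[ab0 ha hb hab].
pose I2 : seq int := [:: -2; -1; 0; 1; 2].
have [aI bI] : a \in I2 /\ b \in I2 by rewrite !inE; lia.
have : all (fun a => all (fun b =>
    near (a, b) ==> ((a, b) \in dirs) || ((- a, - b) \in dirs)) I2) I2 by [].
by move/allP/(_ a aI)/allP/(_ b bI); rewrite /near /= ab0 ha hb hab.
Qed.

Lemma disk_coord_bounds (R : realFieldType) (s a b : R) :
  0 < s -> 2 * s ^+ 2 = 1 -> a ^+ 2 + b ^+ 2 <= 1 ->
  [/\ `|a| <= 2%:R * s, `|b| <= 2%:R * s & (`|a| <= 1%:R * s) || (`|b| <= 1%:R * s)].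
Proof.
move=> s_gt0 s_sqr sqr_ab; have two_s : 1 <= 2 * s by nra.
have /andP[a_ge a_le] : -1 <= a <= 1 by apply/andP; split; nra.
have /andP[b_ge b_le] : -1 <= b <= 1 by apply/andP; split; nra.
rewrite mul1r !ler_norml; split; [apply/andP; split; lra | apply/andP; split; lra |].
by case: (lerP a s); case: (lerP (- s) a); case: (lerP b s); case: (lerP (- s) b) => //=; nra.
Qed.

Lemma card_bigcup_leq (I U : finType) (A : {set I}) (F : I -> {set U}) :
  (#|\bigcup_(i in A) F i| <= \sum_(i in A) #|F i|)%N.
Proof.
elim/big_rec2: _ => [|i B n _ IH]; first by rewrite cards0.
by apply: leq_trans (leq_card_setU _ _).1 _; rewrite leq_add2l.
Qed.

Section Spanner.
Variables (R : rcfType) (s : R).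
Hypotheses (s_gt0 : 0 < s) (s_sqr : 2 * s ^+ 2 = 1).
Variables (T : finType) (p : T -> R * R) (fx fy : R -> int) (sx sy : int -> R).
Hypotheses (sxP : strip_steps s sx) (syP : strip_steps s sy).
Hypotheses (fxP : forall t, in_strip s fx sx (p t).1).
Hypotheses (fyP : forall t, in_strip s fy sy (p t).2).

Definition cell t : int * int := (fx (p t).1, fy (p t).2).

Definition cell_diff x y : int * int := ((cell y).1 - (cell x).1, (cell y).2 - (cell x).2).

Lemma same_cell_udg_edge x y : x != y -> cell x = cell y -> udg_edge p x y.
Proof.
move=> neq_xy [same_x same_y]; rewrite /udg_edge neq_xy edist_le1 /=.
have lt_xy1 := in_strip_same (fxP x) (fxP y) same_x.
have lt_yx1 := in_strip_same (fxP y) (fxP x) (esym same_x).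
have lt_xy2 := in_strip_same (fyP x) (fyP y) same_y.
have lt_yx2 := in_strip_same (fyP y) (fyP x) (esym same_y).
have sqr_x : ((p x).1 - (p y).1) ^+ 2 < s ^+ 2 by nra.
have sqr_y : ((p x).2 - (p y).2) ^+ 2 < s ^+ 2 by nra.
have := s_sqr; lra.
Qed.

Lemma udg_edge_cell_near x y : udg_edge p x y -> cell x != cell y -> near (cell_diff x y).
Proof.
move=> xy; have ix := in_strip_index_norm s_gt0 sxP (fxP x) (fxP y).
have iy := in_strip_index_norm s_gt0 syP (fyP x) (fyP y).
have [/ix dx2 /iy dy2 /orP[/ix|/iy]] := disk_coord_bounds s_gt0 s_sqr (udg_edge_sqr xy).
all: by rewrite /near /cell_diff /cell /= !xpair_eqE; lia.
Qed.

Lemma udg_edges_cell_gap x a b : udg_edge p x a -> udg_edge p x b ->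
  (cell b).2 - (cell a).2 <= 3.
Proof.
move=> xa xb; rewrite udg_edge_sym in xa.
have le_a : (p x).2 - (p a).2 <= 1.
  by have := udg_edge_sqr xa; have := sqr_ge0 ((p x).1 - (p a).1); nra.
have le_b : (p b).2 - (p x).2 <= 1.
  by have := udg_edge_sqr xb; have := sqr_ge0 ((p b).1 - (p x).1); nra.
have three_s : 2 <= 3 * s by have := s_gt0; have := s_sqr; nra.
by rewrite /cell /=; apply: (in_strip_index s_gt0 syP (fyP a) (fyP b)); lra.
Qed.

Definition star := [set [set t; rep cell t] | t in ~: reps cell].

Definition bridge_of r d (ab : T * T) :=
  [&& cell ab.1 == cell r, cell_diff ab.1 ab.2 == d & udg_edge p ab.1 ab.2].

Definition bridge r d : option (T * T) := [pick ab | bridge_of r d ab].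

Definition bridges r : seq {set T} := [seq [set ab.1; ab.2] | ab <- pmap (bridge r) dirs].

Definition spanner := star :|: \bigcup_(r in reps cell) [set e in bridges r].

Lemma bridge_some r d ab : bridge r d = Some ab -> bridge_of r d ab.
Proof. by rewrite /bridge; case: pickP => // ab' ab'_bridge [<-]. Qed.

Lemma bridge_exists r d ab : bridge_of r d ab ->
  exists2 ab', bridge_of r d ab' & bridge r d = Some ab'.
Proof.
move=> ab_bridge; rewrite /bridge.
by case: pickP => [ab' ?|/(_ ab)]; [exists ab' | rewrite ab_bridge].
Qed.

Lemma spanner_udg : spanning_subgraph_udg p spanner.
Proof.
move=> e; rewrite inE => /orP[/imsetP[t t_nrep ->]|/bigcupP[r _]].
  exists t, (rep cell t); split => //; apply: same_cell_udg_edge; last by rewrite rep_key.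
  by move: t_nrep; rewrite !inE eq_sym.
rewrite inE => /mapP[ab]; rewrite mem_pmap => /mapP[d _ /esym/bridge_some].
by case/and3P => _ _ ab_edge ->; exists ab.1, ab.2.
Qed.

Lemma hop_rep t : hop_le spanner 1 t (rep cell t).
Proof.
case: (eqVneq (rep cell t) t) => [->|t_nrep]; first exact: hop_le_refl.
by apply: hop_le_edge; rewrite inE; apply/orP; left; apply/imsetP; exists t; rewrite ?inE.
Qed.

Lemma hop_via_reps x y a b : rep cell a = rep cell x -> rep cell b = rep cell y ->
  hop_le spanner 1 a b -> hop_le spanner 5 x y.
Proof.
move=> rep_a rep_b ab.
have xa : hop_le spanner (1 + 1) x a.
  by apply: hop_le_cat (hop_rep x) _; rewrite -rep_a; apply/hop_le_sym/hop_rep.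
have xb : hop_le spanner (1 + 1) b y.
  by apply: hop_le_cat (hop_rep b) _; rewrite rep_b; apply/hop_le_sym/hop_rep.
exact: hop_le_cat (hop_le_cat xa ab) xb.
Qed.

Lemma hop_bridge x y : udg_edge p x y -> cell_diff x y \in dirs -> hop_le spanner 5 x y.
Proof.
move=> xy d_dirs; set r := rep cell x; set d := cell_diff x y.
have : bridge_of r d (x, y) by rewrite /bridge_of /= /r rep_key !eqxx xy.
case/bridge_exists => -[a b] /and3P[/eqP /= cell_a /eqP diff_ab _] bridge_d.
rewrite rep_key in cell_a.
have cell_b : cell b = cell y.
  move: diff_ab; rewrite /d /cell_diff cell_a.
  by case: (cell b) (cell y) => ? ? [? ?] [? ?]; congr pair; lia.
apply: (hop_via_reps (rep_eq cell_a) (rep_eq cell_b)); apply: hop_le_edge.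
rewrite inE; apply/orP; right; apply/bigcupP; exists r; first by rewrite inE rep_id.
by rewrite inE; apply/mapP; exists (a, b); rewrite // mem_pmap -bridge_d map_f.
Qed.

Lemma spanner_hop x y : udg_edge p x y -> hop_le spanner 5 x y.
Proof.
move=> xy; case: (eqVneq (cell x) (cell y)) => [same|diff].
  exact: (@hop_via_reps x y x x _ (rep_eq same) (hop_le_refl _ _ _)).
have /orP[d_dirs|d_dirs] := near_dirs (udg_edge_cell_near xy diff).
  exact: hop_bridge.
apply/hop_le_sym/hop_bridge; first by rewrite udg_edge_sym.
by rewrite /cell_diff /= !opprB in d_dirs.
Qed.

Lemma size_bridges r : r \in reps cell ->
  (size (bridges r) <= 9 + (r \in crowded cell))%N.
Proof.
move=> r_rep; rewrite size_map size_pmap.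
case: (boolP (r \in crowded cell)) => r_crowded; first exact: count_size.
have [d d_dirs no_bridge] : exists2 d, d \in dirs & bridge r d = None.
  case E1: (bridge r (1, -2)) => [[a1 b1]|]; last by exists (1, -2).
  case E2: (bridge r (0, 2)) => [[a2 b2]|]; last by exists (0, 2).
  have solo := uncrowded_class r_rep r_crowded.
  move/bridge_some: E1 => /and3P[/eqP /= /solo -> /eqP diff1 edge1].
  move/bridge_some: E2 => /and3P[/eqP /= /solo -> /eqP diff2 edge2].
  have := udg_edges_cell_gap edge1 edge2.
  by move: diff1 diff2; rewrite /cell_diff /cell /= => -[_ ?] [_ ?]; lia.
rewrite -ltnS -[10%N]/(size dirs) -(count_predC [eta bridge r]) -{1}[count _ _]addn0.
by rewrite ltn_add2l -has_count; apply/hasP; exists d; rewrite //= no_bridge.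
Qed.

Lemma card_spanner : (#|spanner| <= 9 * #|T|)%N.
Proof.
have star_le : (#|star| <= #|~: reps cell|)%N := leq_imset_card _ _.
have crowded_le : (#|crowded cell| <= #|~: reps cell|)%N := leq_imset_card _ _.
have bridges_le : (\sum_(r in reps cell) #|[set e in bridges r]|
                   <= 9 * #|reps cell| + #|crowded cell|)%N.
  apply: (@leq_trans (\sum_(r in reps cell) (9 + (r \in crowded cell)))).
    by apply: leq_sum => r r_rep; rewrite cardsE (leq_trans (card_size _)) ?size_bridges.
  rewrite big_split sum_nat_const mulnC leq_add2l -sum1_card big_mkcond [leqRHS]big_mkcond.
  by apply: leq_sum => r _; case: (r \in reps cell); case: (r \in crowded cell).
have := (leq_card_setU star (\bigcup_(r in reps cell) [set e in bridges r])).1.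
have := card_bigcup_leq (reps cell) (fun r => [set e in bridges r]).
have := cardsC (reps cell).
rewrite /spanner; lia.
Qed.

Lemma spanner_spec :
  [/\ spanning_subgraph_udg p spanner, (#|spanner| <= 9 * #|T|)%N &
      forall x y, udg_edge p x y -> hop_le spanner 5 x y].
Proof. by split; [exact: spanner_udg | exact: card_spanner | exact: spanner_hop]. Qed.

End Spanner.

Theorem theorem3 (R : rcfType) (T : finType) (p : T -> R * R) (n : nat) :
  injective p -> #|T| = n ->
  exists H : {set {set T}},
    [/\ spanning_subgraph_udg p H,
        (#|H| <= 9 * n)%N &
        forall x y : T, udg_edge p x y -> hop_le H 5 x y].
Proof.
(* udg_edge already excludes loops, so coinciding points need no special care. *)
move=> _ <-; pose s : R := Num.sqrt 2^-1.
have s_gt0 : 0 < s by rewrite sqrtr_gt0 invr_gt0 ltr0n.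
have s_sqr : 2 * s ^+ 2 = 1 by rewrite sqr_sqrtr ?invr_ge0 ?ler0n // mulfV ?pnatr_eq0.
have [fx [sx [sxP fxP]]] := strips_exist s_gt0 [seq (p t).1 | t <- enum T].
have [fy [sy [syP fyP]]] := strips_exist s_gt0 [seq (p t).2 | t <- enum T].
exists (spanner p fx fy); apply: (spanner_spec s_gt0 s_sqr sxP syP) => t.
- by apply/fxP/map_f; rewrite mem_enum.
- by apply/fyP/map_f; rewrite mem_enum.
Qed.
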